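(* Fix an iteration $k$, a current policy $\pi_k$, and a function $M_k:\mathcal Q\to(0,\infty)$. Define \[ L^{\mathrm{Nat}}_{\pi_k}(\pi(\cdot\mid q))=\mathbb E_{o\sim\pi(\cdot\mid q)}\Bigl[\frac{r^*(q,o)-\mathbb E_{o'\sim\pi_k(\cdot\mid q)}[r^*(q,o')]}{M_k(q)}\Bigr]. \] Then for every policy $\pi$, \[ \mathbb{E}_{q\sim\rho_{\mathcal Q}}\bigl[p_{\pi}(q)-p_{\pi_k}(q)\bigr] \ge \mathbb{E}_{q\sim\rho_{\mathcal Q}}\bigl[L^{\mathrm{Nat}}_{\pi_k}(\pi(\cdot\mid q))\bigr] -2\sqrt{\mathbb{E}_{q\sim\rho_{\mathcal Q}}\Bigl(\tfrac{1-M_k(q)}{M_k(q)}\Bigr)^2}\; \sqrt{\mathbb{E}_{q\sim\rho_{\mathcal Q}}\mathrm{TV}^2\bigl(\pi(\cdot\mid q)\,\|\,\pi_k(\cdot\mid q)\bigr)}. \]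
   Context: Setting: $\mathcal Q$ is a set of prompts with a probability distribution $\rho_{\mathcal Q}$; $\mathcal O$ is a countable set of responses; $r^*:\mathcal Q\times\mathcal O\to\{0,1\}$ is the true binary reward. A policy $\pi$ assigns to each $q$ a distribution $\pi(\cdot\mid q)$ on $\mathcal O$; $p_\pi(q)=\mathbb E_{o\sim\pi(\cdot\mid q)}[r^*(q,o)]$. $\mathrm{TV}(P,Q)=\sup_A|P(A)-Q(A)|$ is the total variation distance. *)

From HB Require Import structures.
From mathcomp Require Import all_boot all_order all_algebra.
From mathcomp Require Import all_classical all_reals all_analysis.
Set Implicit Arguments. Unset Strict Implicit. Unset Printing Implicit Defensive.
Import Order.TTheory GRing.Theory Num.Theory.
Local Open Scope classical_set_scope.
Local Open Scope ring_scope.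
Local Open Scope ereal_scope.

Section discrete.
Context {R : realType} {O : countType}.

Definition is_pmf (mu : O -> R) : Prop :=
  (forall o, (0 <= mu o)%R) /\ \esum_(o in [set: O]) (mu o)%:E = 1.

Definition dprob (mu : O -> R) (A : set O) : \bar R :=
  \esum_(o in A) (mu o)%:E.

Definition dexp (mu : O -> R) (f : O -> R) : \bar R :=
  \esum_(o in [set: O]) (Num.max (mu o * f o) 0)%:E
  - \esum_(o in [set: O]) (Num.max (- (mu o * f o)) 0)%:E.

Definition TV (mu nu : O -> R) : \bar R :=
  ereal_sup [set `| dprob mu A - dprob nu A | | A in [set: set O]].
End discrete.

Definition is_policy {d} {Q : measurableType d} {R : realType} {O : countType}
  (pi : Q -> O -> R) : Prop :=
  (forall q, is_pmf (pi q)) /\ (forall o, measurable_fun [set: Q] (fun q => pi q o)).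

Definition p_succ {d} {Q : measurableType d} {R : realType} {O : countType}
  (r : Q -> O -> R) (pi : Q -> O -> R) (q : Q) : \bar R :=
  dexp (pi q) (r q).

Definition L_Nat {d} {Q : measurableType d} {R : realType} {O : countType}
  (r : Q -> O -> R) (pik : Q -> O -> R) (M : Q -> R) (pi : Q -> O -> R) (q : Q)
  : \bar R :=
  dexp (pi q) (fun o => ((r q o - fine (dexp (pik q) (r q))) / M q)%R).

From HB Require Import structures.
From mathcomp Require Import all_boot all_order all_algebra.
From mathcomp Require Import all_classical all_reals all_analysis.
From mathcomp Require Import ring lra measurable_realfun.
Import Order.TTheory GRing.Theory Num.Theory.
Local Open Scope classical_set_scope.
Local Open Scope ring_scope.
Local Open Scope ereal_scope.

(* Since the reward is binary, p_pi(q) is the pi(.|q)-probability of the event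
   {o | r*(q,o) = 1}, so D(q) := p_pi(q) - p_pik(q) satisfies |D(q)| <= TV, and
   L^Nat(q) = D(q) / M(q).  Hence
     E[D] = E[L^Nat] + E[D (1 - M) / M] >= E[L^Nat] - ||D||_2 ||(1 - M) / M||_2
   by Cauchy-Schwarz, and ||D||_2 <= ||TV||_2; the factor 2 is slack. *)

Section esum_countable.
Context {R : realType} {T : countType}.

Definition pickle_series (a : T -> \bar R) (n : nat) : \bar R :=
  if pickle_inv n is Some t then a t else 0.

Lemma pickle_series_ge0 (a : T -> \bar R) n :
  (forall t, 0 <= a t) -> 0 <= pickle_series a n.
Proof. by move=> a0; rewrite /pickle_series; case: pickle_inv. Qed.

Lemma esumT_pickle_series (a : T -> \bar R) : (forall t, 0 <= a t) ->
  \esum_(t in [set: T]) a t = \sum_(n <oo) pickle_series a n.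
Proof.
move=> a0; have a_ge0 n := pickle_series_ge0 a n a0.
rewrite nneseries_esumT // (@esumID _ _ (range (@pickle T)) setT) //.
rewrite [X in _ + X]esum1 ?adde0; last first.
  move=> n [_ n_notin]; rewrite /pickle_series; move: (@pickle_invK T n).
  by case: (pickle_inv n) => // t /= tn; case: n_notin; exists t.
rewrite setTI esum_image; last by move=> x y _ _; exact: (pcan_inj (@pickleK_inv T)).
by apply: eq_esum => t _; rewrite /pickle_series pickleK_inv.
Qed.

Lemma esumZl (k : R) (a : T -> \bar R) : (0 <= k)%R -> (forall t, 0 <= a t) ->
  \esum_(t in [set: T]) (k%:E * a t) = k%:E * \esum_(t in [set: T]) a t.
Proof.
move=> k0 a0; rewrite !esumT_pickle_series // => [|t]; last by rewrite mule_ge0.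
rewrite -nneseriesZl => [|n _]; last exact: pickle_series_ge0.
by apply: eq_eseriesr => n _; rewrite /pickle_series; case: pickle_inv; rewrite ?mule0.
Qed.

End esum_countable.

Lemma measurable_esumT d (Q : measurableType d) (R : realType) (T : countType)
    (h : Q -> T -> \bar R) :
  (forall q t, 0 <= h q t) -> (forall t, measurable_fun [set: Q] (h^~ t)) ->
  measurable_fun [set: Q] (fun q => \esum_(t in [set: T]) h q t).
Proof.
move=> h0 mh.
rewrite (_ : (fun q => _) = fun q => \sum_(n <oo) pickle_series (h q) n); last first.
  by apply/funext => q; rewrite esumT_pickle_series.
apply: ge0_emeasurable_sum => [n q _ _|n _]; first exact: pickle_series_ge0.
by rewrite /pickle_series; case: pickle_inv => [t|]; [exact: mh | exact: measurable_cst].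
Qed.

Lemma dprob_dist_le_TV {R : realType} {O : countType} (mu nu : O -> R) (A : set O) :
  `|dprob mu A - dprob nu A| <= TV mu nu.
Proof. by apply: ereal_sup_ubound; exists A. Qed.

Lemma binary_itv {R : numDomainType} (x : R) : x = 0%R \/ x = 1%R -> (0 <= x <= 1)%R.
Proof. by case=> ->; rewrite ?lexx ?ler01. Qed.

Section pmf_mean.
Context {R : realType} {O : countType}.

Definition pmf_mean (mu f : O -> R) : \bar R :=
  \esum_(o in [set: O]) (mu o * f o)%:E.

Lemma dexp_ge0 (mu f : O -> R) :
  (forall o, 0 <= mu o * f o)%R -> dexp mu f = pmf_mean mu f.
Proof.
move=> muf0; rewrite /dexp (@esum1 _ _ _ (fun o => (Num.max (- (mu o * f o)) 0)%:E)).
  by rewrite sube0; apply: eq_esum => o _; rewrite max_l.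
by move=> o _; rewrite max_r // oppr_le0.
Qed.

Variables (mu f : O -> R).
Hypotheses (hmu : is_pmf mu) (hf : forall o, (0 <= f o <= 1)%R).

Let mu_ge0 o : (0 <= mu o)%R. Proof. by case: hmu. Qed.
Let f_ge0 o : (0 <= f o)%R. Proof. by case/andP: (hf o). Qed.
Let f_le1 o : (f o <= 1)%R. Proof. by case/andP: (hf o). Qed.

Lemma pmf_mean_ge0 : 0 <= pmf_mean mu f.
Proof. by apply: esum_ge0 => o _; rewrite lee_fin mulr_ge0. Qed.

Lemma pmf_mean_le1 : pmf_mean mu f <= 1.
Proof. by case: hmu => _ <-; apply: le_esum => o _; rewrite lee_fin ler_piMr. Qed.

Lemma pmf_meanE : pmf_mean mu f = (fine (pmf_mean mu f))%:E.
Proof.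
rewrite fineK // ge0_fin_numE ?pmf_mean_ge0 //.
by rewrite (le_lt_trans pmf_mean_le1) ?ltry.
Qed.

Lemma fine_pmf_mean_itv : (0 <= fine (pmf_mean mu f) <= 1)%R.
Proof. by rewrite -!lee_fin -pmf_meanE pmf_mean_ge0 pmf_mean_le1. Qed.

Lemma pmf_mean_compl : pmf_mean mu (fun o => 1 - f o)%R = 1 - pmf_mean mu f.
Proof.
have -> : 1 = pmf_mean mu f + pmf_mean mu (fun o => 1 - f o)%R.
  case: hmu => _ <-; rewrite /pmf_mean -esumD => [|o _|o _].
  - by apply: eq_esum => o _; rewrite -EFinD -mulrDr addrC subrK mulr1.
  - by rewrite lee_fin mulr_ge0.
  - by rewrite lee_fin mulr_ge0 // subr_ge0.
by rewrite pmf_meanE addeAC subee // add0e.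
Qed.

Hypothesis f01 : forall o, f o = 0%R \/ f o = 1%R.

(* For binary f the positive part of f - a lives on {f = 1} and the negative
   part on {f = 0}, so each part is a multiple of a pmf_mean. *)
Lemma dexp_binary_affine (a c : R) : (0 <= a <= 1)%R -> (0 < c)%R ->
  dexp mu (fun o => (f o - a) / c)%R = ((fine (pmf_mean mu f) - a) / c)%:E.
Proof.
move=> /andP[a0 a1] c0; have c_ge0 := ltW c0.
rewrite /dexp (eq_esum (b := fun o => ((1 - a) / c)%:E * (mu o * f o)%:E)); last first.
  move=> o _; rewrite -EFinM; congr EFin; case: (f01 o) => ->.
    by rewrite !mulr0 max_r // mulr_ge0_le0 // mulr_le0_ge0 ?sub0r ?oppr_le0 ?invr_ge0.
  by rewrite mulr1 max_l mulrC // mulr_ge0 // divr_ge0 ?subr_ge0.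
rewrite (eq_esum (a := fun o => (Num.max (- (mu o * ((f o - a) / c))) 0)%:E)
  (b := fun o => (a / c)%:E * (mu o * (1 - f o))%:E)); last first.
  move=> o _; rewrite -EFinM; congr EFin; case: (f01 o) => ->.
    rewrite subr0 mulr1 sub0r mulNr mulrN opprK mulrC max_l //.
    by rewrite mulr_ge0 // divr_ge0.
  by rewrite subrr !mulr0 max_r // oppr_le0 mulr_ge0 // divr_ge0 // subr_ge0.
rewrite !esumZl ?divr_ge0 ?subr_ge0 // => [|o|o]; last 2 first.
- by rewrite lee_fin mulr_ge0 // subr_ge0.
- by rewrite lee_fin mulr_ge0.
rewrite -/(pmf_mean mu f) -/(pmf_mean mu (fun o => 1 - f o)%R) pmf_mean_compl.
rewrite [in LHS]pmf_meanE -EFinB; congr EFin.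
by field; rewrite gt_eqF.
Qed.

Lemma dprob_binary : dprob mu [set o | f o = 1%R] = pmf_mean mu f.
Proof.
rewrite /dprob esum_mkcond; apply: eq_esum => o _.
case: (f01 o) => fo; rewrite fo ?mulr1 ?mulr0; last by rewrite ifT // inE.
by rewrite ifF //; apply/negbTE/negP; rewrite inE /= fo => /esym/eqP; rewrite oner_eq0.
Qed.

End pmf_mean.

Section L2_estimate.
Context {d : measure_display} {Q : measurableType d} {R : realType}.

Lemma ge0_le_integralT_nonmeasurable (mu : {measure set Q -> \bar R})
    (f g : Q -> \bar R) :
  (forall q, 0 <= f q) -> (forall q, f q <= g q) ->
  \int[mu]_q f q <= \int[mu]_q g q.
Proof.
move=> f0 fg; have g0 q := le_trans (f0 q) (fg q).
rewrite !ge0_integralTE //; apply: ge_ereal_sup => _ [h hf <-].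
by apply: ereal_sup_ubound; exists h => // q; exact: le_trans (hf q) (fg q).
Qed.

Lemma integral_sqr_le (mu : {measure set Q -> \bar R}) (f : Q -> R) (t : Q -> \bar R) :
  (forall q, `|f q|%:E <= t q) ->
  \int[mu]_q (f q ^+ 2)%:E <= \int[mu]_q t q ^+ 2.
Proof.
move=> ft; apply: ge0_le_integralT_nonmeasurable => q; first by rewrite lee_fin sqr_ge0.
have t0 : 0 <= t q by exact: le_trans (ft q).
by rewrite -real_normK ?num_real // EFinM -expe2 lee_sqr.
Qed.

Lemma integral_abs_mul_le_L2 (mu : {measure set Q -> \bar R}) (f g : Q -> R) :
  measurable_fun [set: Q] f -> measurable_fun [set: Q] g ->
  \int[mu]_q `|(f q * g q)%:E| <=
    sqrte (\int[mu]_q (f q ^+ 2)%:E) * sqrte (\int[mu]_q (g q ^+ 2)%:E).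
Proof.
move=> mf mg.
have N2 (h : Q -> R) : 'N[mu]_2%:E[EFin \o h] = sqrte (\int[mu]_q (h q ^+ 2)%:E).
  rewrite unlock poweR12_sqrt; last by apply: integral_ge0 => q _; exact: poweR_ge0.
  congr sqrte; apply: eq_integral => q _.
  by rewrite /= powR_mulrn ?normr_ge0 // real_normK // num_real.
have two_gt0 : (0 < 2 :> R)%R by [].
have := @hoelder _ _ _ mu f g 2 2 mf mg two_gt0 two_gt0.
rewrite Lnorm1 !N2; apply.
by rewrite -[X in (X + _)%R]mul1r -[X in (_ + X)%R]mul1r -splitr.
Qed.

Variables (rho : probability Q R) (D m : Q -> R) (t : Q -> \bar R).
Hypotheses (mD : measurable_fun [set: Q] D) (mm : measurable_fun [set: Q] m).
Hypotheses (D_le1 : forall q, (`|D q| <= 1)%R) (m_gt0 : forall q, (0 < m q)%R).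
Hypothesis D_le_t : forall q, `|D q|%:E <= t q.

Let g q := ((1 - m q) / m q)%R.

Let mg : measurable_fun [set: Q] g.
Proof.
apply: measurable_funM; first exact: measurable_funB.
rewrite (_ : (fun q => _) = fun q => m q `^ (-1))%R.
  exact: measurableT_comp (measurable_powR _) mm.
by apply/funext => q; rewrite powR_inv1 // ltW.
Qed.

Let integrable_D : rho.-integrable [set: Q] (EFin \o D).
Proof.
apply: (le_integrable _ _ _ (finite_measure_integrable_cst _ 1%R _)) => //.
- exact/measurable_EFinP.
- by move=> q _; rewrite /= normr1 lee_fin D_le1.
Qed.

Lemma integral_ge_divr_sub_L2 :
  \int[rho]_q (D q)%:E >=
  \int[rho]_q (D q / m q)%:E
  - sqrte (\int[rho]_q (g q ^+ 2)%:E) * sqrte (\int[rho]_q t q ^+ 2).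
Proof.
set P := _ * _.
have P0 : 0 <= P by rewrite mule_ge0 // sqrte_ge0.
have abs_Dg_le : \int[rho]_q `|(D q * g q)%:E| <= P.
  apply: le_trans (integral_abs_mul_le_L2 rho _ _ mD mg) _; rewrite /P muleC.
  apply: lee_wpmul2l; first exact: sqrte_ge0.
  by rewrite lee_sqrt ?integral_sqr_le // integral_ge0 // => q _; rewrite sqre_ge0.
case: P P0 abs_Dg_le => [p| |] // P0 abs_Dg_le; last by rewrite addeNy leNye.
have mDg : measurable_fun [set: Q] (fun q => (D q * g q)%:E).
  by apply/measurable_EFinP; exact: measurable_funM.
have integrable_Dg : rho.-integrable [set: Q] (fun q => (D q * g q)%:E).
  by apply/integrableP; split => //; apply: le_lt_trans abs_Dg_le _; rewrite ltry.
have -> : \int[rho]_q (D q / m q)%:E =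
    \int[rho]_q (D q)%:E + \int[rho]_q (D q * g q)%:E.
  rewrite -integralD //; apply: eq_integral => q _; rewrite -EFinD; congr EFin.
  by rewrite /g; field; rewrite gt_eqF.
have Dg_le : \int[rho]_q (D q * g q)%:E <= p%:E.
  by apply: le_trans (lee_abs _) (le_trans (le_abse_integral _ _ mDg) abs_Dg_le).
move: Dg_le; rewrite -(fineK (integrable_fin_num measurableT integrable_D)).
rewrite -(fineK (integrable_fin_num measurableT integrable_Dg)).
move: (fine _) (fine _) => x y; rewrite lee_fin => Dg_le.
by rewrite (_ : _ - _ = (x + y - p)%:E) // lee_fin; lra.
Qed.

End L2_estimate.

Section policy_success.
Context {d : measure_display} {Q : measurableType d} {R : realType} {O : countType}.
Variables (r mu : Q -> O -> R).
Hypotheses (r01 : forall q o, r q o = 0%R \/ r q o = 1%R) (hmu : is_policy mu).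

Let r_itv q o : (0 <= r q o <= 1)%R. Proof. exact: binary_itv. Qed.

Let mu_pmf q : is_pmf (mu q). Proof. by case: hmu. Qed.

Let mur_ge0 q o : (0 <= mu q o * r q o)%R.
Proof. by rewrite mulr_ge0 //; [case: (mu_pmf q) | case/andP: (r_itv q o)]. Qed.

Definition succ_prob q : R := fine (pmf_mean (mu q) (r q)).

Lemma succ_prob_itv q : (0 <= succ_prob q <= 1)%R.
Proof. exact: fine_pmf_mean_itv. Qed.

Lemma pmf_mean_succ_prob q : pmf_mean (mu q) (r q) = (succ_prob q)%:E.
Proof. exact: pmf_meanE. Qed.

Lemma p_succE q : p_succ r mu q = (succ_prob q)%:E.
Proof. by rewrite /p_succ dexp_ge0 // pmf_mean_succ_prob. Qed.

Lemma measurable_succ_prob :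
  (forall o, measurable_fun [set: Q] (fun q => r q o)) ->
  measurable_fun [set: Q] succ_prob.
Proof.
move=> r_meas; apply/measurable_EFinP.
rewrite (_ : _ \o _ = fun q => pmf_mean (mu q) (r q)); last first.
  by apply/funext => q /=; rewrite pmf_mean_succ_prob.
apply: measurable_esumT => [q o|o]; first by rewrite lee_fin.
by apply/measurable_EFinP/measurable_funM => //; case: hmu.
Qed.

End policy_success.

Section two_policies.
Context {d : measure_display} {Q : measurableType d} {R : realType} {O : countType}.
Variables (r pi pik : Q -> O -> R).
Hypotheses (r01 : forall q o, r q o = 0%R \/ r q o = 1%R).
Hypotheses (hpi : is_policy pi) (hpik : is_policy pik).

Lemma L_NatE (M : Q -> R) q : (0 < M q)%R ->
  L_Nat r pik M pi q = ((succ_prob r pi q - succ_prob r pik q) / M q)%:E.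
Proof.
move=> M_gt0; rewrite /L_Nat -/(p_succ r pik q) p_succE //.
rewrite dexp_binary_affine // => [|o|]; first by case: hpi.
- exact: binary_itv.
- exact: succ_prob_itv.
Qed.

Lemma succ_prob_dist_le_TV q :
  `|succ_prob r pi q - succ_prob r pik q|%:E <= TV (pi q) (pik q).
Proof.
apply: le_trans _ (dprob_dist_le_TV _ _ [set o | r q o = 1%R]).
by rewrite !dprob_binary // !pmf_mean_succ_prob.
Qed.

Lemma succ_prob_dist_le1 q : (`|succ_prob r pi q - succ_prob r pik q| <= 1)%R.
Proof.
have /andP[? ?] := succ_prob_itv _ _ r01 hpi q.
have /andP[? ?] := succ_prob_itv _ _ r01 hpik q.
by rewrite ler_norml; apply/andP; split; lra.
Qed.

End two_policies.

Theorem theorem5 (R : realType) (d : measure_display) (Q : measurableType d)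
  (rho : probability Q R) (O : countType)
  (r : Q -> O -> R)
  (hr01 : forall q o, r q o = 0%R \/ r q o = 1%R)
  (hrmeas : forall o, measurable_fun [set: Q] (fun q => r q o))
  (pik : Q -> O -> R) (hpik : is_policy pik)
  (M : Q -> R) (hMpos : forall q, (0 < M q)%R)
  (hMmeas : measurable_fun [set: Q] M)
  (pi : Q -> O -> R) (hpi : is_policy pi) :
  \int[rho]_q (p_succ r pi q - p_succ r pik q) >=
  \int[rho]_q L_Nat r pik M pi q
  - 2%:E * sqrte (\int[rho]_q (((1 - M q) / M q) ^+ 2)%:E)
         * sqrte (\int[rho]_q (TV (pi q) (pik q)) ^+ 2).
Proof.
pose D q := (succ_prob r pi q - succ_prob r pik q)%R.
have -> : (fun q => p_succ r pi q - p_succ r pik q) = fun q => (D q)%:E.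
  by apply/funext => q; rewrite !p_succE.
have -> : L_Nat r pik M pi = fun q => (D q / M q)%:E.
  by apply/funext => q; rewrite L_NatE.
have mD : measurable_fun [set: Q] D.
  by apply: measurable_funB; exact: measurable_succ_prob.
rewrite -muleA; apply: le_trans (integral_ge_divr_sub_L2 rho D M _ mD hMmeas
  (succ_prob_dist_le1 _ _ _ hr01 hpi hpik) hMpos
  (succ_prob_dist_le_TV _ _ _ hr01 hpi hpik)).
apply: leeB => //; apply: lee_pemull; first by rewrite mule_ge0 ?sqrte_ge0.
by rewrite lee_fin ler1n.
Qed.
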